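(* Let $\alpha>0$, $t_0>0$, $x_0,v_0\in\mathcal H$, and let $x$ be a solution of the Cauchy problem $$\tfrac{\alpha}{t}\dot x(t)+\operatorname{proj}_{C(x(t))+\ddot x(t)}(0)=0\ (t>t_0),\qquad x(t_0)=x_0,\ \dot x(t_0)=v_0 .$$ Then there exists a measurable function $\theta:[t_0,+\infty)\to\Delta^m$ with $$\operatorname{proj}_{C(x(t))+\ddot x(t)}(0)=\sum_{i=1}^m\theta_i(t)\nabla f_i(x(t))+\ddot x(t)\quad\text{for all }t\in[t_0,+\infty).$$
   Context: $\mathcal H$ is a real Hilbert space. $f_1,\dots,f_m:\mathcal H\to\mathbb R$ are convex and continuously differentiable. $C(x)=\operatorname{co}\{\nabla f_i(x):i=1,\dots,m\}$. For a closed convex $K$, $\operatorname{proj}_K(y)=\arg\min_{w\in K}\|w-y\|^2$. $\Delta^m=\{\theta\in\mathbb R^m:\theta\ge0,\ \sum_i\theta_i=1\}$. A solution of the Cauchy problem is a function $x:[t_0,+\infty)\to\mathcal H$ such that: $x\in C^1([t_0,+\infty))$; $\dot x$ is absolutely continuous on $[t_0,T]$ for every $T\ge t_0$; there is a Bochner measurable $\ddot x$ with $\dot x(t)=\dot x(t_0)+\int_{t_0}^t\ddot x(s)\,ds$ for all $t$, and $\frac{d}{dt}\dot x=\ddot x$ a.e.; the equation holds for almost all $t\ge t_0$; and the initial conditions hold. Here $\ddot x$ denotes this measurable function. *)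

From HB Require Import structures.
From mathcomp Require Import all_boot all_order all_algebra.
From mathcomp Require Import all_classical all_reals all_analysis.
Set Implicit Arguments. Unset Strict Implicit. Unset Printing Implicit Defensive.
Import Order.TTheory GRing.Theory Num.Theory.
Import numFieldNormedType.Exports.
Local Open Scope classical_set_scope.
Local Open Scope ring_scope.

(* The real line carrying the (completed) Lebesgue sigma-algebra. *)
Definition lebR (R : realType) :=
  caratheodory_type (R:=R) (@wlength R idfun)^*%mu.

Notation lebm := (@completed_lebesgue_measure _).

(* ip is an inner product on H inducing the norm of H; together with the
   completeness of H this makes H a real Hilbert space. *)
Definition is_inner_product (R : realType) (H : normedModType R)
    (ip : H -> H -> R) : Prop :=
  [/\ (forall x y, ip x y = ip y x),
      (forall a x y z, ip (a *: x + y) z = a * ip x z + ip y z) &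
      (forall x, ip x x = `|x| ^+ 2)].

Definition is_gradient (R : realType) (H : normedModType R)
    (ip : H -> H -> R) (f : H -> R) (g : H -> H) : Prop :=
  forall x, differentiable f x /\ forall h, 'd f x h = ip (g x) h.

Definition convex_fun (R : realType) (H : normedModType R) (f : H -> R) : Prop :=
  forall (l : R) (x y : H), 0 <= l <= 1 ->
    f (l *: x + (1 - l) *: y) <= l * f x + (1 - l) * f y.

Definition simplex (R : realType) (m : nat) : set ('I_m -> R) :=
  [set th | (forall i, 0 <= th i) /\ \sum_(i < m) th i = 1].

Definition conv_hull (R : realType) (H : normedModType R) (m : nat)
    (p : 'I_m -> H) : set H :=
  [set \sum_(i < m) th i *: p i | th in @simplex R m].

Definition Cset (R : realType) (H : normedModType R) (m : nat)
    (g : 'I_m -> H -> H) (x : H) : set H :=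
  conv_hull (fun i => g i x).

Definition translate (R : realType) (H : normedModType R) (K : set H) (a : H)
  : set H := [set k + a | k in K].

Definition proj_set (R : realType) (H : normedModType R) (K : set H) (y : H) : H :=
  get [set p | K p /\ forall w, K w -> `|p - y| ^+ 2 <= `|w - y| ^+ 2].

Definition abs_cont_on (R : realType) (H : normedModType R) (u : R -> H)
    (a0 b0 : R) : Prop :=
  forall e : R, 0 < e -> exists2 d : R, 0 < d &
    forall (n : nat) (a b : 'I_n -> R),
      (forall k, a0 <= a k /\ a k <= b k /\ b k <= b0) ->
      (forall j k, j != k -> b j <= a k \/ b k <= a j) ->
      \sum_(k < n) (b k - a k) < d ->
      \sum_(k < n) `|u (b k) - u (a k)| < e.

(* Bochner (strong) measurability of u on D w.r.t. Lebesgue measure: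
   u is a.e. on D the pointwise limit of simple functions. *)
Definition bochner_measurable (R : realType) (H : normedModType R)
    (D : set R) (u : R -> H) : Prop :=
  exists (N : nat -> nat) (A : forall n, 'I_(N n) -> set (lebR R))
         (c : forall n, 'I_(N n) -> H),
    (forall n k, measurable (A n k)) /\
    \forall t \ae lebm, D t ->
      (fun n => \sum_(k < N n) (\1_(A n k) t : R) *: c n k) @ \oo --> u t.

(* x solves the Cauchy problem with velocity v = x' and acceleration a = x''. *)
Definition is_solution (R : realType) (H : completeNormedModType R)
    (ip : H -> H -> R) (m : nat) (g : 'I_m -> H -> H)
    (alpha t0 : R) (x0 v0 : H) (x v a : R -> H) : Prop :=
   (forall t, t0 < t -> is_derive t 1 x (v t)) /\
   (fun h : R => h^-1 *: (x (t0 + h) - x t0)) @ 0^'+ --> v t0 /\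
   {within `[t0, +oo[, continuous v} /\
   (forall T, t0 <= T -> abs_cont_on v t0 T) /\
   (* a Bochner measurable, Bochner integrable on each [t0, T], and
      v t = v t0 + Bochner-int_{t0}^{t} a  (tested against every h in H) *)
   [/\ bochner_measurable `[t0, +oo[ a,
       (forall T, t0 <= T ->
          lebm.-integrable (`[t0, T] : set (lebR R)) (fun s => (`|a s|)%:E)) &
       (forall h t, t0 <= t ->
          (\int[lebm]_(s in (`[t0, t] : set (lebR R))) (ip (a s) h)%:E)%E
          = (ip (v t) h - ip (v t0) h)%:E)] /\
   (\forall t \ae lebm, t0 < t -> is_derive (t : R) 1 v (a t)) /\
   (\forall t \ae lebm, t0 < t ->
      (alpha / t) *: v t + proj_set (translate (Cset g (x t)) (a t)) 0 = 0) /\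
   x t0 = x0 /\ v t0 = v0.

(* For each t, theta(t) has to minimize the convex quadratic
   Q_t(theta) = |sum_i theta_i grad f_i(x(t)) + x''(t)|^2 over the simplex: by
   strict convexity of the norm of H, any minimizer gives the projection.  The
   difficulty is to choose a minimizer measurably in t, without a measurable
   selection theorem.  For a strongly convex quadratic on the simplex the
   Frank-Wolfe iterates (the linear minimization oracle breaking ties by the
   smallest index) are built from finitely many comparisons and field
   operations on the data and converge, so the minimizer of Q_t + eps |theta|^2
   is measurable in t.  As eps decreases to 0 these minimizers have
   nondecreasing norm and form a Cauchy family, whose limit minimizes Q_t.
   The data of Q_t are inner products of the grad f_i(x(t)), continuous for
   t > t0, and of x''(t), an a.e. limit of simple functions; hence theta is
   measurable up to a null set, which suffices for the complete Lebesgue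
   measure. *)

From HB Require Import structures.
From mathcomp Require Import all_boot all_order all_algebra.
From mathcomp Require Import all_classical all_reals all_analysis.
From mathcomp Require Import measurable_realfun ring lra.
Import Order.TTheory GRing.Theory Num.Theory.
Import numFieldNormedType.Exports.
Local Open Scope classical_set_scope.
Local Open Scope ring_scope.

(** * Quadratic forms on the simplex *)

Section SimplexQuadratic.
Context {R : realType} {m : nat}.
Implicit Types (G : 'I_m -> 'I_m -> R) (b u v w d : 'I_m -> R).

Lemma fctDZE u c v i : (u + c *: v) i = u i + c * v i.
Proof. by []. Qed.

Lemma fctBE u v i : (u - v) i = u i - v i.
Proof. by []. Qed.

Definition dotv u v := \sum_i u i * v i.
Definition bform G u v := \sum_i \sum_j u i * v j * G i j.
Definition qform G b u := bform G u u + 2 * dotv u b.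
Definition qgrad G b u : 'I_m -> R :=
  fun j => 2 * (\sum_i u i * G i j) + 2 * b j.
Definition is_sym G := forall i j, G i j = G j i.
Definition is_psd G := forall d, 0 <= bform G d d.

Lemma dotvDZl u c v w : dotv (u + c *: v) w = dotv u w + c * dotv v w.
Proof.
by rewrite /dotv mulr_sumr -big_split; apply: eq_bigr => i _ /=; rewrite fctDZE; ring.
Qed.

Lemma bformDZl G u c v w : bform G (u + c *: v) w = bform G u w + c * bform G v w.
Proof.
rewrite /bform mulr_sumr -big_split; apply: eq_bigr => i _ /=.
by rewrite mulr_sumr -big_split; apply: eq_bigr => j _ /=; rewrite fctDZE; ring.
Qed.

Lemma bformDZr G u c v w : bform G w (u + c *: v) = bform G w u + c * bform G w v.
Proof.
rewrite /bform mulr_sumr -big_split; apply: eq_bigr => i _ /=.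
by rewrite mulr_sumr -big_split; apply: eq_bigr => j _ /=; rewrite fctDZE; ring.
Qed.

Lemma bformC G u v : is_sym G -> bform G u v = bform G v u.
Proof.
move=> sG; rewrite /bform exchange_big.
by apply: eq_bigr => i _; apply: eq_bigr => j _; rewrite sG; ring.
Qed.

Lemma dotv_qgrad G b u d : dotv d (qgrad G b u) = 2 * bform G u d + 2 * dotv d b.
Proof.
rewrite /dotv /qgrad /bform [in RHS]exchange_big !mulr_sumr -big_split /=.
apply: eq_bigr => j _; rewrite !mulr_sumr mulrDr; congr (_ + _); last by ring.
by rewrite mulr_sumr; apply: eq_bigr => i _; ring.
Qed.

Lemma qformDZ G b u c d : is_sym G ->
  qform G b (u + c *: d) =
  qform G b u + c * dotv d (qgrad G b u) + c ^+ 2 * bform G d d.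
Proof.
move=> sG; rewrite dotv_qgrad /qform bformDZl !bformDZr dotvDZl (bformC _ d u sG).
ring.
Qed.

Lemma addrZ_subK u w : u + 1 *: (w - u) = w.
Proof. by rewrite scale1r addrC subrK. Qed.

Lemma qform_ge_tangent G b u w : is_sym G -> is_psd G ->
  dotv (w - u) (qgrad G b u) <= qform G b w - qform G b u.
Proof.
move=> sG pG; rewrite -{2}(addrZ_subK u w) qformDZ // expr1n !mul1r.
by have := pG (w - u); lra.
Qed.

Lemma qform_midpoint G b u v : is_sym G ->
  qform G b (u + 2^-1 *: (v - u)) =
  (qform G b u + qform G b v) / 2 - bform G (v - u) (v - u) / 4.
Proof.
move=> sG; have := qformDZ G b u 1 (v - u) sG; rewrite addrZ_subK => ->.
by rewrite qformDZ //; field.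
Qed.

Lemma dotvBl u v w : dotv (u - v) w = dotv u w - dotv v w.
Proof. by rewrite /dotv -sumrB; apply: eq_bigr => i _; rewrite fctBE mulrBl. Qed.

Lemma dotv_self_ge0 u : 0 <= dotv u u.
Proof. by apply: sumr_ge0 => i _; rewrite -expr2 sqr_ge0. Qed.

Lemma sqr_le_dotv_self u i : u i ^+ 2 <= dotv u u.
Proof.
rewrite /dotv (bigD1 i) //= expr2 lerDl.
by apply: sumr_ge0 => j _; rewrite -expr2 sqr_ge0.
Qed.

Lemma simplex_le1 u i : simplex u -> u i <= 1.
Proof. by move=> [u0 <-]; rewrite (bigD1 i) //= lerDl; exact: sumr_ge0. Qed.

Lemma dotv_self_simplex {u} : simplex u -> dotv u u <= 1.
Proof.
move=> su; rewrite -su.2; apply: ler_sum => i _.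
by rewrite ler_piMr // ?su.1 // simplex_le1.
Qed.

Lemma simplex_segment u v c : simplex u -> simplex v -> 0 <= c <= 1 ->
  simplex (u + c *: (v - u)).
Proof.
move=> [u0 u1] [v0 v1] /andP[c0 c1]; split => [i|].
  by rewrite fctDZE fctBE; have := u0 i; have := v0 i; nra.
under eq_bigr do rewrite fctDZE fctBE.
by rewrite big_split /= -mulr_sumr sumrB u1 v1 subrr mulr0 addr0.
Qed.

Lemma midpoint_fctE u v : 2^-1 *: (u + v) = u + 2^-1 *: (v - u).
Proof.
by apply/funext => i; rewrite fctDZE fctBE -[LHS]/(2^-1 * (u i + v i)); field.
Qed.

Lemma simplex_midpoint u v : simplex u -> simplex v -> simplex (2^-1 *: (u + v)).
Proof.
move=> su sv; rewrite midpoint_fctE; apply: simplex_segment => //.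
by rewrite invr_ge0 ler0n /= invf_le1 ?ler1n.
Qed.

Lemma qform_near_min {G b y y'} {delta : R} : is_sym G -> simplex y -> simplex y' ->
  (forall w, simplex w -> qform G b y <= qform G b w + delta) ->
  bform G (y' - y) (y' - y) <= 2 * (qform G b y' - qform G b y) + 4 * delta.
Proof.
move=> sG sy sy' ymin.
have := ymin _ (simplex_midpoint _ _ sy sy').
by rewrite midpoint_fctE qform_midpoint //; lra.
Qed.

Hypothesis m_gt0 : (0 < m)%N.

(* The vertex e_l of the simplex for the smallest index l minimizing D; it is
   written as a boolean test on the values of D so that it is measurable in D. *)
Definition minvertex (D : 'I_m -> R) : 'I_m -> R := fun l =>
  if [forall j, (D l <= D j) && ((j < l)%N ==> (D l < D j))] then 1 else 0.

Lemma minvertexP D :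
  exists2 l, (forall j, D l <= D j) & minvertex D = fun j => (j == l)%:R.
Proof.
pose S := [pred l : 'I_m | [forall j, D l <= D j]].
have [l1 _ l1_min] := @arg_minP _ R _ (Ordinal m_gt0) predT D isT.
have Sl1 : S l1 by apply/forallP => j; exact: l1_min.
have [l Sl l_first] := arg_minnP (fun i : 'I_m => val i) Sl1.
have Dl j : D l <= D j by exact: (forallP Sl j).
exists l => //; apply/funext => l'; rewrite /minvertex.
case: ifPn => [/forallP minl'|/forallP nminl'].
  have Sl' : S l' by apply/forallP => j; have /andP[] := minl' j.
  have := l_first _ Sl'; rewrite leq_eqVlt => /orP[/eqP/val_inj -> |ll'].
    by rewrite eqxx.
  by have /andP[_ /implyP/(_ ll')] := minl' l; rewrite ltNge Dl.
case: eqVneq => [El|//]; subst l'; exfalso; apply: nminl' => j.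
rewrite Dl /=; apply/implyP => jl; rewrite lt_neqAle Dl andbT.
apply: contraTneq jl => Dj; rewrite -leqNgt; apply: l_first.
by apply/forallP => k; rewrite -Dj.
Qed.

Lemma dotv_delta l D : dotv (fun j => (j == l)%:R) D = D l.
Proof.
by rewrite /dotv (bigD1 l) //= eqxx mul1r big1 ?addr0 // => j /negbTE ->; rewrite mul0r.
Qed.

Lemma minvertex_simplex D : simplex (minvertex D).
Proof.
have [l _ ->] := minvertexP D; split => [i|]; first by rewrite ler0n.
by have := dotv_delta l (fun=> 1); rewrite /dotv; under eq_bigr do rewrite mulr1.
Qed.

Lemma minvertex_min D w : simplex w -> dotv (minvertex D) D <= dotv w D.
Proof.
move=> [w0 w1]; have [l Dl ->] := minvertexP D; rewrite dotv_delta.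
rewrite -[D l]mul1r -w1 mulr_suml; apply: ler_sum => i _.
by rewrite ler_wpM2l.
Qed.

(** * Frank-Wolfe iteration *)

Definition abs_sum G := \sum_i \sum_j `|G i j|.

Lemma abs_sum_ge0 G : 0 <= abs_sum G.
Proof. by apply: sumr_ge0 => i _; apply: sumr_ge0. Qed.

Lemma bform_le_abs_sum G d : (forall i, `|d i| <= 1) -> bform G d d <= abs_sum G.
Proof.
move=> d_le1; apply: ler_sum => i _; apply: ler_sum => j _.
apply: le_trans (ler_norm _) _; rewrite !normrM ler_piMl //.
by rewrite -[1]mulr1 ler_pM.
Qed.

Lemma frank_wolfe_step {G b u w} {c : R} : is_sym G -> is_psd G ->
  simplex u -> simplex w -> 0 <= c <= 1 ->
  qform G b (u + c *: (minvertex (qgrad G b u) - u)) - qform G b w <=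
  (1 - c) * (qform G b u - qform G b w) + c ^+ 2 * abs_sum G.
Proof.
move=> sG pG su sw /andP[c0 c1]; set s := minvertex _.
have ss : simplex s := minvertex_simplex _.
have descent : dotv (s - u) (qgrad G b u) <= qform G b w - qform G b u.
  apply: le_trans (qform_ge_tangent _ b u w sG pG).
  by rewrite !dotvBl lerD2r minvertex_min.
have curvature : bform G (s - u) (s - u) <= abs_sum G.
  apply: bform_le_abs_sum => i; rewrite fctBE ler_norml.
  have := ss.1 i; have := su.1 i.
  have := simplex_le1 _ i ss; have := simplex_le1 _ i su.
  lra.
rewrite qformDZ //.
have := ler_wpM2l c0 descent; have := ler_wpM2l (sqr_ge0 c) curvature; lra.
Qed.

Lemma fw_step_size k : (0 : R) <= 2 / k.+2%:R <= (1 : R).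
Proof. by rewrite divr_ge0 ?ler0n //= ler_pdivrMr ?ltr0n // mul1r ler_nat. Qed.

Fixpoint frank_wolfe G b k : 'I_m -> R :=
  if k is k'.+1 then
    let u := frank_wolfe G b k' in
    u + (2 / k'.+2%:R) *: (minvertex (qgrad G b u) - u)
  else minvertex 0.

Lemma frank_wolfe_simplex G b k : simplex (frank_wolfe G b k).
Proof.
elim: k => [|k IH]; first exact: minvertex_simplex.
exact: simplex_segment IH (minvertex_simplex _) (fw_step_size k).
Qed.

Lemma frank_wolfe_gap G b w k : is_sym G -> is_psd G -> simplex w ->
  qform G b (frank_wolfe G b k.+1) - qform G b w <= 4 * abs_sum G / k.+3%:R.
Proof.
move=> sG pG sw; have C0 := abs_sum_ge0 G.
elim: k => [|k IH].
  apply: le_trans (frank_wolfe_step sG pG (frank_wolfe_simplex G b 0) sw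
    (fw_step_size 0)) _.
  rewrite divff // subrr mul0r add0r expr1n mul1r.
  by rewrite ler_pdivlMr ?ltr0n // mulrC ler_wpM2r // ler_nat.
apply: le_trans (frank_wolfe_step sG pG (frank_wolfe_simplex G b k.+1) sw
  (fw_step_size k.+1)) _.
set n : R := k.+3%:R; have n_gt0 : 0 < n by rewrite ltr0n.
have -> : k.+4%:R = n + 1 by rewrite -natr1.
have /andP[_ c_le1] := fw_step_size k.+1; rewrite -/n -subr_ge0 in c_le1.
apply: le_trans (lerD (ler_wpM2l c_le1 IH) (lexx _)) _; rewrite -/n.
have -> : (1 - 2 / n) * (4 * abs_sum G / n) + (2 / n) ^+ 2 * abs_sum G =
    4 * abs_sum G * (n - 1) / (n * n) by field; rewrite gt_eqF.
rewrite ler_pdivrMr ?mulr_gt0 // [X in _ <= X]mulrAC ler_pdivlMr ?addr_gt0 //.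
have : 4 * abs_sum G * (n - 1) * (n + 1) <= 4 * abs_sum G * (n * n).
  by rewrite -mulrA ler_wpM2l ?mulr_ge0 //; nra.
lra.
Qed.

Lemma cvg_div_nat (K : R) : K / n.+3%:R @[n --> \oo] --> 0.
Proof.
rewrite -(mulr0 K); apply: cvgMl_tmp.
have := @cvg_harmonic R; rewrite -(cvg_shiftn 2) /harmonic /=.
by under eq_fun do rewrite addn2.
Qed.

Lemma cauchy_sq_cvg (u e : nat -> R) : e n @[n --> \oo] --> 0 ->
  (forall n k, (n <= k)%N -> (u k - u n) ^+ 2 <= e n) -> cvgn u.
Proof.
move=> e0 u_cauchy; apply: cauchy_cvg; apply: cauchy_exP => eps eps0.
move/cvgrPdist_lt : e0 => /(_ (eps ^+ 2)); rewrite exprn_gt0 // => /(_ isT).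
case=> N _ eN; exists (u N); exists N => // n /= Nn; rewrite -ball_normE /=.
have := eN N (leqnn N); rewrite /= sub0r normrN => /(le_lt_trans (ler_norm _)) eNe.
have : `|u N - u n| ^+ 2 < eps ^+ 2.
  by rewrite real_normK ?num_real // -sqrrN opprB (le_lt_trans (u_cauchy N n Nn)).
by rewrite ltr_pXn2r // ?nnegrE ?ltW.
Qed.

Lemma simplex_cauchy_cvg {y : nat -> 'I_m -> R} {e : nat -> R} :
  (forall n, simplex (y n)) -> e n @[n --> \oo] --> 0 ->
  (forall n k, (n <= k)%N -> dotv (y k - y n) (y k - y n) <= e n) ->
  simplex (fun i => limn (y ^~ i)) /\ forall i, y ^~ i @ \oo --> limn (y ^~ i).
Proof.
move=> sy e0 y_cauchy.
have cvy i : y ^~ i @ \oo --> limn (y ^~ i).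
  apply: (cauchy_sq_cvg _ _ e0) => n k nk.
  exact: le_trans (sqr_le_dotv_self _ i) (y_cauchy n k nk).
split => //; split => [i|].
  by apply: limr_ge (cvy i) _; apply: nearW => n; exact: (sy n).1.
have : \sum_i y n i @[n --> \oo] --> \sum_i limn (y ^~ i).
  by apply: cvg_big => //; exact: add_continuous.
under eq_fun do rewrite (sy _).2.
by move/(cvg_lim (@Rhausdorff R)) <-; rewrite lim_cst.
Qed.

Lemma qform_cvg G b (y : nat -> 'I_m -> R) z :
  (forall i, y ^~ i @ \oo --> z i) -> qform G b (y n) @[n --> \oo] --> qform G b z.
Proof.
move=> cvy; apply: cvgD.
  apply: cvg_big => // [|i _]; first exact: add_continuous.
  apply: cvg_big => // [|j _]; first exact: add_continuous.
  by apply: cvgMr_tmp; apply: cvgM.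
apply: cvgMl_tmp; apply: cvg_big => // [|i _]; first exact: add_continuous.
exact: cvgMr_tmp.
Qed.

Lemma qform_le_lim {G b} {y : nat -> 'I_m -> R} {z} {r : nat -> R} {w} :
  (forall i, y ^~ i @ \oo --> z i) -> r n @[n --> \oo] --> 0 ->
  (forall n, qform G b (y n) - qform G b w <= r n) -> qform G b z <= qform G b w.
Proof.
move=> cvy r0 y_le.
have : qform G b (y n) - r n @[n --> \oo] --> qform G b z - 0.
  by apply: cvgB => //; exact: qform_cvg.
rewrite subr0 => cvQ; rewrite -(cvg_lim (@Rhausdorff R) cvQ).
apply: limr_le; first exact: cvgP cvQ.
by apply: nearW => n; have := y_le n; lra.
Qed.

Lemma coercive_psd {G} {eps : R} : 0 < eps ->
  (forall d, eps * dotv d d <= bform G d d) -> is_psd G.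
Proof.
move=> eps_gt0 coerc d; apply: le_trans (coerc d).
exact: mulr_ge0 (ltW eps_gt0) (dotv_self_ge0 d).
Qed.

Lemma frank_wolfe_cauchy {G} b {eps : R} n k : is_sym G -> 0 < eps ->
  (forall d, eps * dotv d d <= bform G d d) -> (n <= k)%N ->
  dotv (frank_wolfe G b k.+1 - frank_wolfe G b n.+1)
       (frank_wolfe G b k.+1 - frank_wolfe G b n.+1)
    <= 24 * abs_sum G / eps / n.+3%:R.
Proof.
move=> sG eps_gt0 coerc nk; have pG := coercive_psd eps_gt0 coerc.
have sfw := frank_wolfe_simplex G b.
set yn := frank_wolfe G b n.+1; set yk := frank_wolfe G b k.+1.
set delta := 4 * abs_sum G / n.+3%:R.
have near_min :
    bform G (yk - yn) (yk - yn) <= 2 * (qform G b yk - qform G b yn) + 4 * delta.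
  apply: (qform_near_min sG (sfw _) (sfw _)) => w sw.
  by have := frank_wolfe_gap _ b w n sG pG sw; rewrite -/yn -/delta; lra.
have later : qform G b yk - qform G b yn <= delta.
  apply: le_trans (frank_wolfe_gap _ b _ k sG pG (sfw n.+1)) _.
  rewrite ler_wpM2l ?mulr_ge0 ?abs_sum_ge0 //.
  by rewrite lef_pV2 ?posrE ?ltr0n // ler_nat !ltnS.
have -> : 24 * abs_sum G / eps / n.+3%:R = 6 * delta / eps.
  by rewrite /delta; field; rewrite gt_eqF //= ltr0n.
rewrite ler_pdivlMr // mulrC; have := coerc (yk - yn); lra.
Qed.

Definition fw_limit G b : 'I_m -> R :=
  fun i => limn (fun k => frank_wolfe G b k.+1 i).

Lemma fw_limitP {G} b {eps : R} : is_sym G -> 0 < eps ->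
  (forall d, eps * dotv d d <= bform G d d) ->
  [/\ simplex (fw_limit G b),
      forall w, simplex w -> qform G b (fw_limit G b) <= qform G b w
    & forall i, (fun k => frank_wolfe G b k.+1 i) @ \oo --> fw_limit G b i].
Proof.
move=> sG eps_gt0 coerc; have pG := coercive_psd eps_gt0 coerc.
have [sz cvz] := @simplex_cauchy_cvg (fun n => frank_wolfe G b n.+1) _
  (fun n => frank_wolfe_simplex G b n.+1)
  (cvg_div_nat _) (fun n k => frank_wolfe_cauchy b n k sG eps_gt0 coerc).
split => // w sw; apply: (qform_le_lim cvz (cvg_div_nat (4 * abs_sum G))) => n.
exact: frank_wolfe_gap.
Qed.

(** * Tikhonov regularization *)

Definition regularize G (eps : R) : 'I_m -> 'I_m -> R :=
  fun i j => G i j + (if i == j then eps else 0).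

Lemma bform_regularize G eps u v :
  bform (regularize G eps) u v = bform G u v + eps * dotv u v.
Proof.
rewrite /bform /regularize /dotv mulr_sumr -big_split; apply: eq_bigr => i _ /=.
under eq_bigr do rewrite mulrDr.
rewrite big_split /=; congr (_ + _).
rewrite (bigD1 i) //= eqxx big1 ?addr0; first by ring.
by move=> j /negbTE; rewrite eq_sym => ->; rewrite mulr0.
Qed.

Lemma qform_regularize G b eps u :
  qform (regularize G eps) b u = qform G b u + eps * dotv u u.
Proof. by rewrite /qform bform_regularize; ring. Qed.

Lemma regularize_sym {G} eps : is_sym G -> is_sym (regularize G eps).
Proof. by move=> sG i j; rewrite /regularize sG eq_sym. Qed.

Lemma regularize_coercive {G} eps d : is_psd G ->
  eps * dotv d d <= bform (regularize G eps) d d.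
Proof. by move=> pG; rewrite bform_regularize lerDr. Qed.

Section TikhonovLimit.
Variables (G : 'I_m -> 'I_m -> R) (b : 'I_m -> R).
Variables (ep : nat -> R) (z : nat -> 'I_m -> R).
Hypotheses (sG : is_sym G) (pG : is_psd G).
Hypotheses (ep_gt0 : forall n, 0 < ep n) (ep_cvg0 : ep n @[n --> \oo] --> 0).
Hypothesis ep_decr : forall n k, (n < k)%N -> ep k < ep n.
Hypothesis z_simplex : forall n, simplex (z n).
Hypothesis z_min : forall n w, simplex w ->
  qform G b (z n) + ep n * dotv (z n) (z n) <= qform G b w + ep n * dotv w w.

Lemma tikhonov_norm_mono n k : (n <= k)%N -> dotv (z n) (z n) <= dotv (z k) (z k).
Proof.
rewrite leq_eqVlt => /orP[/eqP -> //|nk].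
have : (ep n - ep k) * (dotv (z n) (z n) - dotv (z k) (z k)) <= 0.
  have := z_min n _ (z_simplex k); have := z_min k _ (z_simplex n); nra.
by rewrite pmulr_rle0 ?subr_gt0 ?ep_decr // subr_le0.
Qed.

Let N n := dotv (z n) (z n).

Lemma tikhonov_norm_cvg : N n @[n --> \oo] --> limn N.
Proof.
apply: cvgP (nondecreasing_cvgn _ _); first exact: tikhonov_norm_mono.
by exists 1 => _ [n _ <-]; exact: dotv_self_simplex.
Qed.

Lemma tikhonov_cauchy n k : (n <= k)%N ->
  dotv (z k - z n) (z k - z n) <= 2 * (limn N - N n).
Proof.
move=> nk; set d := z k - z n.
have NkL : N k <= limn N.
  apply: nondecreasing_cvgn_le; first exact: tikhonov_norm_mono.
  exact: cvgP tikhonov_norm_cvg.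
have zn_min w : simplex w ->
    qform (regularize G (ep n)) b (z n) <= qform (regularize G (ep n)) b w + 0.
  by move=> sw; rewrite addr0 !qform_regularize; exact: z_min.
have near_min :=
  qform_near_min (regularize_sym (ep n) sG) (z_simplex n) (z_simplex k) zn_min.
rewrite mulr0 addr0 !qform_regularize bform_regularize -/d in near_min.
have zk_min := z_min k _ (z_simplex n).
have Nnk : ep k * (N n - N k) <= 0.
  by rewrite pmulr_rle0 ?ep_gt0 // subr_le0 tikhonov_norm_mono.
have : ep n * dotv d d <= ep n * (2 * (N k - N n)).
  by have := pG d; rewrite /N in Nnk *; lra.
by rewrite ler_pM2l //; lra.
Qed.

Lemma tikhonov_cvg :
  [/\ simplex (fun i => limn (z ^~ i)),
      forall w, simplex w -> qform G b (fun i => limn (z ^~ i)) <= qform G b w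
    & forall i, z ^~ i @ \oo --> limn (z ^~ i)].
Proof.
have e_cvg0 : 2 * (limn N - N n) @[n --> \oo] --> 0.
  rewrite -(mulr0 2) -(subrr (limn N)).
  by apply: cvgMl_tmp; apply: cvgB; [exact: cvg_cst | exact: tikhonov_norm_cvg].
have [sz cvz] := simplex_cauchy_cvg z_simplex e_cvg0 tikhonov_cauchy.
split => // w sw; apply: (qform_le_lim cvz ep_cvg0) => n.
have := z_min n _ sw; have := dotv_self_simplex sw; have := dotv_self_ge0 (z n).
have := ep_gt0 n; nra.
Qed.

End TikhonovLimit.

Definition tikhonov_min G b : 'I_m -> R :=
  fun i => limn (fun n => fw_limit (regularize G (harmonic n)) b i).

Lemma tikhonov_minP G b : is_sym G -> is_psd G ->
  [/\ simplex (tikhonov_min G b),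
      forall w, simplex w -> qform G b (tikhonov_min G b) <= qform G b w
    & forall i, (fun n => fw_limit (regularize G (harmonic n)) b i) @ \oo
                  --> tikhonov_min G b i].
Proof.
move=> sG pG.
have fwP n := fw_limitP b (regularize_sym (harmonic n) sG) (harmonic_gt0 n)
  (fun d => regularize_coercive (harmonic n) d pG).
apply: (@tikhonov_cvg G b harmonic (fun n => fw_limit (regularize G (harmonic n)) b)
  sG pG (@harmonic_gt0 R) cvg_harmonic).
- by move=> n k nk; rewrite ltf_pV2 ?posrE ?ltr0n // ltr_nat ltnS.
- by move=> n; have [] := fwP n.
- by move=> n w sw; rewrite -!qform_regularize; have [_ ->] := fwP n.
Qed.

(** * Measurable dependence on the data *)

Section Measurability.
Context {d : measure_display} {T : measurableType d} {E : set T}.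
Hypothesis mE : measurable E.

Lemma measurable_fun_all (I : eqType) (s : seq I) (c : I -> T -> bool) :
  (forall j, measurable_fun E (c j)) -> measurable_fun E (fun t => all (c ^~ t) s).
Proof.
move=> mc; elim: s => [|j s IH] /=; first exact: measurable_cst.
exact: measurable_and.
Qed.

Lemma measurable_minvertex (D : T -> 'I_m -> R) l :
  (forall j, measurable_fun E (D ^~ j)) ->
  measurable_fun E (fun t => minvertex (D t) l).
Proof.
move=> mD; apply: measurable_fun_if => //; [|exact: measurable_cst..].
pose c j t := (D t l <= D t j) && ((j < l)%N ==> (D t l < D t j)).
apply: (eq_measurable_fun (fun t => all (c ^~ t) (enum 'I_m))).
  move=> t _; apply/allP/forallP => [c_all j|c_all j _]; last exact: c_all.
  by apply: c_all; rewrite mem_enum.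
apply: measurable_fun_all => j; apply: measurable_and.
  exact: measurable_fun_ler.
case: (j < l)%N => /=; [exact: measurable_fun_ltr | exact: measurable_cst].
Qed.

Lemma measurable_frank_wolfe (G : T -> 'I_m -> 'I_m -> R) (b : T -> 'I_m -> R) k i :
  (forall i j, measurable_fun E (fun t => G t i j)) ->
  (forall i, measurable_fun E (fun t => b t i)) ->
  measurable_fun E (fun t => frank_wolfe (G t) (b t) k i).
Proof.
move=> mG mb; elim: k i => [|k IH] i.
  exact: measurable_cst.
under eq_fun do rewrite /= fctDZE fctBE.
apply: measurable_funD => //; apply: measurable_funM; first exact: measurable_cst.
apply: measurable_funB => //; apply: measurable_minvertex => j.
apply: measurable_funD; apply: measurable_funM => //; try exact: measurable_cst.
by apply: measurable_sum => l; exact: measurable_funM.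
Qed.

Lemma measurable_fw_limit {G : T -> 'I_m -> 'I_m -> R} {b : T -> 'I_m -> R}
    {eps : R} i :
  0 < eps -> (forall t, E t -> is_sym (G t)) ->
  (forall t, E t -> forall d, eps * dotv d d <= bform (G t) d d) ->
  (forall i j, measurable_fun E (fun t => G t i j)) ->
  (forall i, measurable_fun E (fun t => b t i)) ->
  measurable_fun E (fun t => fw_limit (G t) (b t) i).
Proof.
move=> eps_gt0 sG coerc mG mb.
apply: (@measurable_fun_cvg _ _ _ E (fun k t => frank_wolfe (G t) (b t) k.+1 i)).
  by move=> k; exact: measurable_frank_wolfe.
by move=> t Et; have [_ _] := fw_limitP (b t) (sG t Et) eps_gt0 (coerc t Et).
Qed.

Lemma measurable_tikhonov_min (G : T -> 'I_m -> 'I_m -> R) (b : T -> 'I_m -> R) i :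
  (forall t, E t -> is_sym (G t)) -> (forall t, E t -> is_psd (G t)) ->
  (forall i j, measurable_fun E (fun t => G t i j)) ->
  (forall i, measurable_fun E (fun t => b t i)) ->
  measurable_fun E (fun t => tikhonov_min (G t) (b t) i).
Proof.
move=> sG pG mG mb.
apply: (@measurable_fun_cvg _ _ _ E
  (fun n t => fw_limit (regularize (G t) (harmonic n)) (b t) i)).
  move=> n; apply: (measurable_fw_limit i (harmonic_gt0 n)) => // [t Et|t Et y|j l].
  - exact: regularize_sym _ (sG t Et).
  - exact: regularize_coercive _ _ (pG t Et).
  - by apply: measurable_funD => //; exact: measurable_cst.
by move=> t Et; have [_ _] := tikhonov_minP _ (b t) (sG t Et) (pG t Et).
Qed.

End Measurability.
End SimplexQuadratic.

(** * Inner products and projections *)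

Definition gram {R : realType} {H : normedModType R} (ip : H -> H -> R) {m}
  (p : 'I_m -> H) : 'I_m -> 'I_m -> R := fun i j => ip (p i) (p j).

Definition gram_lin {R : realType} {H : normedModType R} (ip : H -> H -> R) {m}
  (p : 'I_m -> H) (a : H) : 'I_m -> R := fun i => ip (p i) a.

Section InnerProduct.
Context {R : realType} {H : normedModType R} {ip : H -> H -> R}.
Hypothesis hip : is_inner_product ip.
Implicit Types x y z : H.

Lemma ipC x y : ip x y = ip y x.
Proof. by case: hip. Qed.

Lemma ipDZl a x y z : ip (a *: x + y) z = a * ip x z + ip y z.
Proof. by case: hip. Qed.

Lemma ipxx x : ip x x = `|x| ^+ 2.
Proof. by case: hip. Qed.

Lemma ipDl x y z : ip (x + y) z = ip x z + ip y z.
Proof. by rewrite -[x in LHS]scale1r ipDZl mul1r. Qed.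

Lemma ip0l z : ip 0 z = 0.
Proof. by have := ipDl 0 0 z; rewrite addr0; lra. Qed.

Lemma ipZl a x z : ip (a *: x) z = a * ip x z.
Proof. by rewrite -[a *: x]addr0 ipDZl ip0l addr0. Qed.

Lemma ipNl x z : ip (- x) z = - ip x z.
Proof. by rewrite -scaleN1r ipZl mulN1r. Qed.

Lemma ipDr x y z : ip z (x + y) = ip z x + ip z y.
Proof. by rewrite ipC ipDl ![ip _ z]ipC. Qed.

Lemma ipNr x z : ip z (- x) = - ip z x.
Proof. by rewrite ipC ipNl ipC. Qed.

Lemma ip_suml m (u : 'I_m -> R) (p : 'I_m -> H) z :
  ip (\sum_i u i *: p i) z = \sum_i u i * ip (p i) z.
Proof.
elim/big_rec2: _ => [|i y1 y2 _ <-]; first exact: ip0l.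
by rewrite ipDl ipZl.
Qed.

Lemma ip_sumr m (u : 'I_m -> R) (p : 'I_m -> H) z :
  ip z (\sum_i u i *: p i) = \sum_i u i * ip z (p i).
Proof. by rewrite ipC ip_suml; apply: eq_bigr => i _; rewrite ipC. Qed.

Lemma ip_polar x y : ip x y = (`|x + y| ^+ 2 - `|x - y| ^+ 2) / 4.
Proof. by rewrite -!ipxx !ipDl !ipDr !ipNl !ipNr (ipC y x); field. Qed.

Lemma cvg_ip {T} {F : set_system T} {FF : Filter F} {f g : T -> H} {u w} :
  f t @[t --> F] --> u -> g t @[t --> F] --> w ->
  ip (f t) (g t) @[t --> F] --> ip u w.
Proof.
move=> fu gw; rewrite ip_polar; under eq_fun do rewrite ip_polar.
apply: cvgMr_tmp; apply: cvgB; rewrite ?expr2; apply: cvgM; apply: cvg_norm;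
  by [apply: cvgD | apply: cvgB].
Qed.

Lemma parallelogram x y : `|x + y| ^+ 2 + `|x - y| ^+ 2 = 2 * `|x| ^+ 2 + 2 * `|y| ^+ 2.
Proof. by rewrite -!ipxx !ipDl !ipDr !ipNl !ipNr; ring. Qed.

Lemma scale_half_double x : 2^-1 *: (x + x) = x.
Proof. by rewrite -mulr2n -[x *+ 2]scaler_nat scalerA mulVf ?pnatr_eq0 // scale1r. Qed.

Definition midpoint_closed (K : set H) :=
  forall u w, K u -> K w -> K (2^-1 *: (u + w)).

Lemma min_dist_unique (K : set H) y p q : midpoint_closed K -> K p -> K q ->
  (forall w, K w -> `|p - y| ^+ 2 <= `|w - y| ^+ 2) ->
  (forall w, K w -> `|q - y| ^+ 2 <= `|w - y| ^+ 2) -> p = q.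
Proof.
move=> Kmid Kp Kq pmin qmin.
have pq := qmin _ Kp; have qp := pmin _ Kq; have mid := pmin _ (Kmid _ _ Kp Kq).
have mid_eq : 2^-1 *: (p + q) - y = 2^-1 *: ((p - y) + (q - y)).
  by rewrite addrACA -opprD scalerBr scale_half_double.
rewrite mid_eq normrZ exprMn ger0_norm ?invr_ge0 ?ler0n // in mid.
have diff_eq : p - y - (q - y) = p - q by rewrite opprB addrA subrK.
have par := parallelogram (p - y) (q - y); rewrite diff_eq in par.
have pq_le0 : `|p - q| ^+ 2 <= 0 by lra.
by apply/eqP; rewrite -subr_eq0 -normr_eq0 -sqrf_eq0 eq_le pq_le0 sqr_ge0.
Qed.

Lemma proj_setE (K : set H) y p : midpoint_closed K -> K p ->
  (forall w, K w -> `|p - y| ^+ 2 <= `|w - y| ^+ 2) -> proj_set K y = p.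
Proof.
move=> Kmid Kp pmin; rewrite /proj_set.
case: (@getPex _ [set q | K q /\ forall w, K w -> `|q - y| ^+ 2 <= `|w - y| ^+ 2]).
  by exists p.
by move=> Kq qmin; exact: min_dist_unique Kmid Kq Kp qmin pmin.
Qed.

Section Gram.
Context {m : nat} (p : 'I_m -> H).
Implicit Types u v th : 'I_m -> R.

Lemma gram_sym : is_sym (gram ip p).
Proof. by move=> i j; rewrite /gram ipC. Qed.

Lemma bform_gram u v :
  bform (gram ip p) u v = ip (\sum_i u i *: p i) (\sum_i v i *: p i).
Proof.
rewrite ip_suml; apply: eq_bigr => i _; rewrite ip_sumr mulr_sumr.
by apply: eq_bigr => j _; rewrite /gram mulrA.
Qed.

Lemma gram_psd : is_psd (gram ip p).
Proof. by move=> d; rewrite bform_gram ipxx sqr_ge0. Qed.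

Lemma norm_lincomb_sq a u :
  `|\sum_i u i *: p i + a| ^+ 2 = qform (gram ip p) (gram_lin ip p a) u + `|a| ^+ 2.
Proof.
rewrite -!ipxx ipDl !ipDr /qform bform_gram (ipC a) !ip_suml.
by rewrite /dotv /gram_lin; ring.
Qed.

Lemma lincomb_midpoint u v : \sum_i (2^-1 *: (u + v)) i *: p i =
  2^-1 *: (\sum_i u i *: p i + \sum_i v i *: p i).
Proof.
rewrite -big_split scaler_sumr; apply: eq_bigr => i _.
by rewrite [RHS]scalerDr !scalerA -scalerDl -mulrDr.
Qed.

Lemma translate_conv_hull_midpoint_closed a :
  midpoint_closed (translate (conv_hull p) a).
Proof.
move=> _ _ [_ [u su <-] <-] [_ [v sv <-] <-].
exists (\sum_i (2^-1 *: (u + v)) i *: p i).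
  by exists (2^-1 *: (u + v)) => //; exact: simplex_midpoint.
by rewrite lincomb_midpoint addrACA [RHS]scalerDr scale_half_double.
Qed.

Lemma proj_set_translate_conv_hull a th : simplex th ->
  (forall w, simplex w -> qform (gram ip p) (gram_lin ip p a) th <=
                          qform (gram ip p) (gram_lin ip p a) w) ->
  proj_set (translate (conv_hull p) a) 0 = \sum_i th i *: p i + a.
Proof.
move=> sth thmin; apply: proj_setE; first exact: translate_conv_hull_midpoint_closed.
  by exists (\sum_i th i *: p i) => //; exists th.
by move=> _ [_ [w sw <-] <-]; rewrite !subr0 !norm_lincomb_sq lerD2r thmin.
Qed.

End Gram.

End InnerProduct.

(** * Lebesgue measurability *)

Lemma measurable_fun_ae {d} {T : measurableType d} {R : realType}
    {mu : {measure set T -> \bar R}} {D P : set T} {f : T -> R} :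
  measure_is_complete mu -> measurable D -> (\forall x \ae mu, P x) ->
  measurable_fun (D `&` P) f -> measurable_fun D f.
Proof.
move=> mu_complete mD negP mf.
have mP : measurable P.
  by rewrite -[P]setCK; apply: measurableC; exact: mu_complete _ negP.
rewrite -(setIT D) -(setUv P) setIUr.
apply/measurable_funU; [exact: measurableI | exact: measurableI mD (measurableC mP) |].
split; first exact: mf.
move=> _ Y mY; apply: mu_complete; apply: negligibleS negP.
by move=> t [[_ ?] _].
Qed.

Section LebesgueReal.
Context {R : realType}.

Lemma measurable_lebR {A : set R} :
  measurable A -> @measurable _ (lebR R) A.
Proof. exact: sub_caratheodory. Qed.

Lemma measurable_fun_continuous (D : set R) (f : R -> R) :
  open D -> {in D, continuous f} -> @measurable_fun _ _ (lebR R) R D f.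
Proof.
move=> oD fc _ Y mY; apply: measurable_lebR.
exact: open_continuous_measurable_fun oD fc (open_measurable oD) _ mY.
Qed.

Lemma measurable_fun_itv_oo_co (t0 : R) (f : lebR R -> R) :
  measurable_fun (`]t0, +oo[ : set (lebR R)) f ->
  measurable_fun (`[t0, +oo[ : set (lebR R)) f.
Proof.
move=> mf; have -> : `[t0, +oo[%classic = [set t0] `|` `]t0, +oo[ :> set (lebR R).
  apply/seteqP; split => t /=; rewrite !in_itv /= !andbT.
    by rewrite le_eqVlt => /orP[/eqP <-|]; [left | right].
  by case=> [->|/ltW].
apply/measurable_funU; [exact: measurable_lebR (measurable_set1 _)
  | exact: measurable_lebR (measurable_itv _) |].
by split; [exact: measurable_fun_set1 | exact: mf].
Qed.

End LebesgueReal.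

Section GramAlongCurve.
Context {R : realType} {H : normedModType R} {ip : H -> H -> R}.
Hypothesis hip : is_inner_product ip.
Context {m : nat} {D : set R} {p : R -> 'I_m -> H}.
Hypothesis D_open : open D.
Hypothesis p_cont : forall i t, D t -> {for t, continuous (p ^~ i)}.

Lemma measurable_ip_curve {E : set (lebR R)} i h :
  E `<=` D -> measurable_fun E (fun t => ip (p t i) h).
Proof.
move=> ED; apply: measurable_funS (measurable_lebR (open_measurable D_open)) ED _.
apply: measurable_fun_continuous => // t; rewrite inE => Dt.
by apply: (cvg_ip hip); [exact: p_cont | exact: cvg_cst].
Qed.

Lemma measurable_gram {E : set (lebR R)} i j :
  E `<=` D -> measurable_fun E (fun t => gram ip (p t) i j).
Proof.
move=> ED; apply: measurable_funS (measurable_lebR (open_measurable D_open)) ED _.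
apply: measurable_fun_continuous => // t; rewrite inE => Dt.
by apply: (cvg_ip hip); exact: p_cont.
Qed.

Lemma measurable_gram_lin {E : set (lebR R)} {a : R -> H} {N : nat -> nat}
    {A : forall n, 'I_(N n) -> set (lebR R)} {c : forall n, 'I_(N n) -> H} i :
  E `<=` D -> (forall n k, measurable (A n k)) ->
  (forall t, E t ->
    (fun n => \sum_(k < N n) (\1_(A n k) t : R) *: c n k) @ \oo --> a t) ->
  measurable_fun E (fun t => gram_lin ip (p t) (a t) i).
Proof.
move=> ED mA a_lim.
apply: (@measurable_fun_cvg _ _ _ E
  (fun n t => \sum_(k < N n) (\1_(A n k) t : R) * ip (p t i) (c n k))).
  move=> n; apply: measurable_sum => k; apply: measurable_funM.
    exact: measurable_indic.
  exact: measurable_ip_curve.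
move=> t Et; under eq_fun do rewrite -(ip_sumr hip).
by apply: (cvg_ip hip); [exact: cvg_cst | exact: a_lim].
Qed.

End GramAlongCurve.

Theorem lemma4p3 (R : realType) (H : completeNormedModType R)
  (ip : H -> H -> R) (m : nat) (f : 'I_m -> H -> R) (g : 'I_m -> H -> H)
  (alpha t0 : R) (x0 v0 : H) (x v a : R -> H) :
  is_inner_product ip ->
  (0 < m)%N ->
  (forall i, convex_fun (f i)) ->
  (forall i, is_gradient ip (f i) (g i)) ->
  (forall i, continuous (g i)) ->
  0 < alpha -> 0 < t0 ->
  is_solution ip g alpha t0 x0 v0 x v a ->
  exists theta : R -> 'I_m -> R,
    (forall i, measurable_fun (`[t0, +oo[ : set (lebR R))
                              (fun t : lebR R => theta t i)) /\
    (forall t, t0 <= t ->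
       @simplex R m (theta t) /\
       proj_set (translate (Cset g (x t)) (a t)) 0
         = \sum_(i < m) theta t i *: g i (x t) + a t).
Proof.
move=> hip m_gt0 _ _ g_cont _ _ [x_deriv [_ [_ [_ [[a_bochner _ _] _]]]]].
pose p t i := g i (x t).
have [N [A [c [mA a_approx]]]] := a_bochner.
have p_cont i t : `]t0, +oo[%classic t -> {for t, continuous (p ^~ i)}.
  rewrite /= in_itv /= andbT => t0t; apply: continuous_comp (g_cont i (x t)).
  by apply/differentiable_continuous/derivable1_diffP; have [] := x_deriv t t0t.
exists (fun t => tikhonov_min (gram ip (p t)) (gram_lin ip (p t) (a t))).
split => [i|t _]; last first.
  have [th_simplex th_min _] := tikhonov_minP m_gt0 _ (gram_lin ip (p t) (a t))
    (gram_sym hip (p t)) (gram_psd hip (p t)).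
  by split => //; exact: (proj_set_translate_conv_hull hip (p t)).
apply: measurable_fun_itv_oo_co.
apply: (measurable_fun_ae completed_lebesgue_measure_is_complete _ a_approx).
  exact: measurable_lebR (measurable_itv _).
move=> mE; apply: (measurable_tikhonov_min m_gt0 mE); last exact: mE.
- by move=> t _; exact: gram_sym.
- by move=> t _; exact: gram_psd.
- by move=> j k; apply: (measurable_gram hip (rray_open t0) p_cont) => t [].
- move=> j; apply: (measurable_gram_lin hip (rray_open t0) p_cont j _ mA).
    by move=> t [].
  by move=> t [Ot]; apply; move: Ot; rewrite /= !in_itv /= !andbT => /ltW.
Qed.
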